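(* For every word $x\in\{a,b\}^*$ there is a 2-state MCQFA (with complex amplitudes) over $\{a,b\}$ that accepts $x$ with probability $0$ and accepts every word $y\in\{a,b\}^*$ with $y\neq x$ with nonzero probability; i.e. the complement of the singleton language $\{x\}$ is recognized by a 2-state nondeterministic MCQFA.
   Context: A 2-state Moore–Crutchfield quantum finite automaton (MCQFA) over $\{a,b\}$ consists of unitaries $U_a,U_b\in\mathbb{C}^{2\times 2}$, an initial unit vector $|u_0\rangle\in\mathbb{C}^2$ and a set of accepting basis states; on input $w=w_1\cdots w_k$ the final state is $U_{w_k}\cdots U_{w_1}|u_0\rangle$ and the acceptance probability is the sum of the squared moduli of its accepting coordinates. A language $L$ is recognized by a nondeterministic MCQFA if words in $L$ are accepted with nonzero probability and words not in $L$ with probability $0$. *)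

From HB Require Import structures.
From mathcomp Require Import all_boot all_order all_algebra.
Set Implicit Arguments. Unset Strict Implicit. Unset Printing Implicit Defensive.
Import Order.TTheory GRing.Theory Num.Theory.
Local Open Scope ring_scope.

(* Alphabet {a,b}: false = a, true = b. Words are seq bool. *)
Definition letter := bool.

Section MCQFA.
Variable C : numClosedFieldType.

Definition adjmx (n : nat) (A : 'M[C]_n) : 'M[C]_n := \matrix_(i, j) (A j i)^*.

Definition unitarymx (n : nat) (U : 'M[C]_n) : Prop := U *m adjmx U = 1%:M.

Record mcqfa2 := MCQFA2 {
  Ua : 'M[C]_2;
  Ub : 'M[C]_2;
  u0 : 'cV[C]_2;
  acc : {set 'I_2}
}.

Definition wf_mcqfa2 (M : mcqfa2) : Prop :=
  [/\ unitarymx (Ua M), unitarymx (Ub M) & \sum_(i < 2) `|u0 M i 0| ^+ 2 = 1].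

Definition letter_mx (M : mcqfa2) (c : letter) : 'M[C]_2 :=
  if c then Ub M else Ua M.

(* final state U_{w_k} ... U_{w_1} u0 : letters applied left to right *)
Definition final_state (M : mcqfa2) (w : seq letter) : 'cV[C]_2 :=
  foldl (fun v c => letter_mx M c *m v) (u0 M) w.

Definition acc_prob (M : mcqfa2) (w : seq letter) : C :=
  \sum_(i in acc M) `|final_state M w i 0| ^+ 2.

Definition nd_recognizes (M : mcqfa2) (L : seq letter -> Prop) : Prop :=
  forall w, (L w -> acc_prob M w != 0) /\ (~ L w -> acc_prob M w = 0).

End MCQFA.

(* Let U_a = (1/5) [[3, -4], [4, 3]] and U_b = (1/5) [[3, 4i], [4i, 3]], starting
   in e_1.  After reading y the state is 5^-|y| w(y), where w(y) has Gaussian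
   integer entries, and distinct words give non-parallel vectors:
   - if y and z end with the same letter l, det (w(y), w(z)) is det (5 U_l) = 25
     times the determinant for the shortened words;
   - otherwise reduce modulo the prime 2 + i, i.e. map i to 3 in F_5: there both
     5 U_a and 5 U_b have rank one, so w(y) is a nonzero vector on a line that
     only depends on the last letter of y, and the three possible lines differ.
   A unitary change of basis sending the final state psi(x) of x to e_1 then
   makes the probability of ending in the second basis state equal to
   |det (psi(x), psi(y))|^2, which vanishes exactly when y = x. *)

From Pilot Require Import Defs.
From HB Require Import structures.
From mathcomp Require Import all_boot all_order all_algebra.
From mathcomp Require Import ring.
Import Order.TTheory GRing.Theory Num.Theory.
Local Open Scope ring_scope.

Set Implicit Arguments. Unset Strict Implicit. Unset Printing Implicit Defensive.

Section TwoByTwo.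
Variable R : comNzRingType.

Definition mx2 (a b c d : R) : 'M[R]_2 :=
  \matrix_(i, k) if i == ord0 then (if k == ord0 then a else b)
                 else (if k == ord0 then c else d).

Definition cv2 (a b : R) : 'cV[R]_2 := \col_i if i == ord0 then a else b.

Definition cross2 (u v : 'cV[R]_2) : R :=
  u ord0 ord0 * v ord_max ord0 - u ord_max ord0 * v ord0 ord0.

Lemma cv2E a b i k : cv2 a b i k = if i == ord0 then a else b.
Proof. by rewrite mxE. Qed.

Lemma mx2_mul a b c d a' b' c' d' :
  mx2 a b c d *m mx2 a' b' c' d' =
  mx2 (a * a' + b * c') (a * b' + b * d') (c * a' + d * c') (c * b' + d * d').
Proof.
apply/matrixP => i k; rewrite !mxE !big_ord_recl big_ord0 addr0 !mxE.
by case: i => [[|[|?]] ?]; case: k => [[|[|?]] ?].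
Qed.

Lemma mx2_mulcv a b c d x y :
  mx2 a b c d *m cv2 x y = cv2 (a * x + b * y) (c * x + d * y).
Proof.
apply/matrixP => i k; rewrite !mxE !big_ord_recl big_ord0 addr0 !mxE.
by case: i => [[|[|?]] ?].
Qed.

Lemma scale_mx2 k a b c d : k *: mx2 a b c d = mx2 (k * a) (k * b) (k * c) (k * d).
Proof.
by apply/matrixP => i l; rewrite !mxE; case: (i == ord0); case: (l == ord0).
Qed.

Lemma scale_cv2 k a b : k *: cv2 a b = cv2 (k * a) (k * b).
Proof. by apply/matrixP => i l; rewrite !mxE; case: (i == ord0). Qed.

Lemma mx2_1 : mx2 1 0 0 1 = 1%:M.
Proof.
by apply/matrixP => i k; rewrite !mxE; case: i => [[|[|?]] ?]; case: k => [[|[|?]] ?].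
Qed.

Lemma cv2_eta (v : 'cV[R]_2) : v = cv2 (v ord0 ord0) (v ord_max ord0).
Proof.
apply/matrixP => i k; rewrite mxE [k]ord1.
by case: i => [[|[|?]] ?] //=; congr (v _ _); apply: val_inj.
Qed.

Lemma cross2_cv2 a b c d : cross2 (cv2 a b) (cv2 c d) = a * d - b * c.
Proof. by rewrite /cross2 !cv2E. Qed.

Lemma cross2_mx2_mulcv a b c d u v :
  cross2 (mx2 a b c d *m u) (mx2 a b c d *m v) = (a * d - b * c) * cross2 u v.
Proof.
rewrite (cv2_eta u) (cv2_eta v) !mx2_mulcv !cross2_cv2; ring.
Qed.

Lemma cross2Zl k u v : cross2 (k *: u) v = k * cross2 u v.
Proof. by rewrite /cross2 !mxE; ring. Qed.

Lemma cross2Zr k u v : cross2 u (k *: v) = k * cross2 u v.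
Proof. by rewrite /cross2 !mxE; ring. Qed.

Lemma cross2vv u : cross2 u u = 0.
Proof. by rewrite /cross2 mulrC subrr. Qed.

End TwoByTwo.

Lemma map_mx2 (R S : comNzRingType) (f : {rmorphism R -> S}) a b c d :
  map_mx f (mx2 a b c d) = mx2 (f a) (f b) (f c) (f d).
Proof.
by apply/matrixP => i k; rewrite !mxE; case: (i == ord0); case: (k == ord0).
Qed.

Lemma map_cv2 (R S : comNzRingType) (f : {rmorphism R -> S}) a b :
  map_mx f (cv2 a b) = cv2 (f a) (f b).
Proof. by apply/matrixP => i k; rewrite !mxE; case: (i == ord0). Qed.

Lemma rmorph_cross2 (R S : comNzRingType) (f : {rmorphism R -> S}) u v :
  f (cross2 u v) = cross2 (map_mx f u) (map_mx f v).
Proof. by rewrite /cross2 !mxE rmorphB !rmorphM. Qed.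

Section WordVectors.
Variables (R : comNzRingType) (j : R).

(* [step_mx 'i l] is 5 U_l; keeping [j] abstract lets the same words be read in
   C (j = 'i), in 'F_5 (j = 3) and in {poly int} (j = 'X). *)
Definition step_mx (l : letter) : 'M[R]_2 :=
  if l then mx2 3 (4 * j) (4 * j) 3 else mx2 3 (- 4) 4 3.

Definition word_vec (y : seq letter) : 'cV[R]_2 :=
  foldl (fun v l => step_mx l *m v) (cv2 1 0) y.

Lemma word_vec_rcons y l : word_vec (rcons y l) = step_mx l *m word_vec y.
Proof. by rewrite /word_vec foldl_rcons. Qed.

Lemma cross2_step_mx (j2 : j * j = -1) l u v :
  cross2 (step_mx l *m u) (step_mx l *m v) = 25 * cross2 u v.
Proof.
by rewrite /step_mx; case: l; rewrite cross2_mx2_mulcv; congr (_ * _); ring: j2.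
Qed.

End WordVectors.

Lemma map_word_vec (R S : comNzRingType) (f : {rmorphism R -> S}) (j : R) y :
  map_mx f (word_vec j y) = word_vec (f j) y.
Proof.
elim/last_ind: y => [|y l IH]; first by rewrite map_cv2 rmorph1 rmorph0.
rewrite !word_vec_rcons map_mxM IH; congr (_ *m _).
by case: l; rewrite /step_mx map_mx2 ?rmorphM ?rmorphN !rmorph_nat.
Qed.

Definition last_letter (y : seq letter) : option letter :=
  if y is l :: s then Some (last l s) else None.

Lemma last_letter_rcons y l : last_letter (rcons y l) = Some l.
Proof. by case: y => [|l' s] //=; rewrite last_rcons. Qed.

(* Slopes of the line of e_1 and of the images of [step_mx 3 false] and
   [step_mx 3 true], which have rank one over 'F_5. *)
Definition slope5 (o : option letter) : 'F_5 :=
  match o with None => 0 | Some false => 3 | Some true => 4 end.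

Lemma slope5_inj : injective slope5.
Proof. by do 2![case=> [[]|]]. Qed.

Lemma step_mx_F5_slope l o : exists2 c : 'F_5, c != 0 &
  step_mx 3 l *m cv2 1 (slope5 o) = c *: cv2 1 (slope5 (Some l)).
Proof.
rewrite /step_mx; case: l; case: o => [[]|]; rewrite mx2_mulcv;
  [exists 1|exists 4|exists 3|exists 2|exists 1|exists 3] => //;
  by rewrite scale_cv2; congr cv2; apply/eqP.
Qed.

Lemma word_vec_F5 y : exists2 c : 'F_5, c != 0 &
  word_vec 3 y = c *: cv2 1 (slope5 (last_letter y)).
Proof.
elim/last_ind: y => [|y l [c c0 IH]]; first by exists 1; rewrite ?scale1r.
have [c' c'0 step] := step_mx_F5_slope l (last_letter y).
exists (c * c'); first by rewrite mulf_neq0.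
by rewrite word_vec_rcons IH last_letter_rcons -scalemxAr step scalerA.
Qed.

Lemma cross2_word_vec_F5 y z : last_letter y != last_letter z ->
  cross2 (word_vec (3 : 'F_5) y) (word_vec 3 z) != 0.
Proof.
move=> yz; have [c c0 ->] := word_vec_F5 y; have [c' c'0 ->] := word_vec_F5 z.
rewrite cross2Zl cross2Zr cross2_cv2 mul1r mulr1 !mulf_neq0 // subr_eq0.
by apply: contra yz => /eqP/slope5_inj <-.
Qed.

(* {poly int} stands in for the Gaussian integers: [int_horner 'i] maps it onto
   Z[i] and [int_horner 3] onto its residue field 'F_5 at the prime 2 + i. *)
Definition int_horner (S : comNzRingType) (s : S) : {rmorphism {poly int} -> S} :=
  horner_morph (fun n : int => mulrC s n%:~R).

Lemma int_hornerX (S : comNzRingType) (s : S) : int_horner s 'X = s.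
Proof. exact: horner_morphX. Qed.

Lemma int_horner_lin (S : comNzRingType) (s : S) (p : {poly int}) : (size p <= 2)%N ->
  int_horner s p = (p`_0)%:~R + (p`_1)%:~R * s.
Proof.
move=> p2; rewrite /int_horner /= /horner_morph (@horner_coef_wide _ 2).
  by rewrite !big_ord_recl big_ord0 !coef_map /= expr0 expr1 mulr1 addr0.
exact: leq_trans (size_poly _ _) p2.
Qed.

Lemma gauss_int_eq0 (C : numClosedFieldType) (a b : int) :
  a%:~R + b%:~R * 'i = 0 :> C -> a = 0 /\ b = 0.
Proof.
rewrite mulrC => ab0; split; apply/eqP; rewrite -(intr_eq0 C).
  by rewrite -(Re_rect (realz C a) (realz C b)) ab0 raddf0.
by rewrite -(Im_rect (realz C a) (realz C b)) ab0 raddf0.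
Qed.

Lemma int_horner_i_eq0 (C : numClosedFieldType) (p : {poly int}) :
  int_horner ('i : C) p = 0 -> int_horner (3 : 'F_5) p = 0.
Proof.
(* Both evaluations kill X^2 + 1, and evaluation at 'i is injective on
   polynomials of degree < 2. *)
pose q : {poly int} := 'X^2 + 1.
have q_monic : q \is monic by rewrite monicXnaddC.
have q_size : size q = 3 by rewrite size_XnaddC.
have r2 : (size (p %% q)%R <= 2)%N.
  by have := ltn_modp p q; rewrite q_size monic_neq0.
have qi : int_horner ('i : C) q = 0.
  by rewrite rmorphD rmorphXn int_hornerX rmorph1 sqrCi addNr.
have q3 : int_horner (3 : 'F_5) q = 0.
  by rewrite rmorphD rmorphXn int_hornerX rmorph1; apply/eqP.
rewrite (Pdiv.IdomainMonic.divp_eq q_monic p) !rmorphD !rmorphM qi q3 !mulr0 !add0r.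
rewrite !int_horner_lin // => /gauss_int_eq0 [-> ->].
by rewrite mul0r addr0.
Qed.

Lemma int_horner_cross2_word_vec (S : comNzRingType) (s : S) y z :
  int_horner s (cross2 (word_vec 'X y) (word_vec 'X z)) =
  cross2 (word_vec s y) (word_vec s z).
Proof. by rewrite rmorph_cross2 !map_word_vec int_hornerX. Qed.

Lemma cross2_word_vec_last (C : numClosedFieldType) y z :
  last_letter y != last_letter z -> cross2 (word_vec ('i : C) y) (word_vec 'i z) != 0.
Proof.
move=> yz; apply: contraNneq (cross2_word_vec_F5 yz).
rewrite -(int_horner_cross2_word_vec ('i : C)) -(int_horner_cross2_word_vec (3 : 'F_5)).
by move=> /int_horner_i_eq0 ->.
Qed.

Lemma cross2_word_vec_neq0 (C : numClosedFieldType) y z :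
  y != z -> cross2 (word_vec ('i : C) y) (word_vec 'i z) != 0.
Proof.
elim/last_ind: y z => [|y l IH] z.
  by case/lastP: z => [|z l] // _; apply: cross2_word_vec_last; rewrite last_letter_rcons.
case/lastP: z => [_|z l'].
  by apply: cross2_word_vec_last; rewrite last_letter_rcons.
have [<- yz|ll' _] := eqVneq l l'; last first.
  apply: cross2_word_vec_last; rewrite !last_letter_rcons.
  by apply: contraNneq ll' => -[->].
have i2 : 'i * 'i = -1 :> C by rewrite -expr2 sqrCi.
rewrite !word_vec_rcons cross2_step_mx // mulf_eq0 negb_or pnatr_eq0 IH //.
by apply: contraNneq yz => ->.
Qed.

(* The bare name [unitarymx] denotes the qualifier of mathcomp's spectral.v. *)
Section Unitary.
Variable C : numClosedFieldType.

Lemma sqnorm2E (v : 'cV[C]_2) :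
  \sum_i `|v i 0| ^+ 2 = `|v ord0 ord0| ^+ 2 + `|v ord_max ord0| ^+ 2.
Proof.
by rewrite big_ord_recr big_ord1; congr (`|v _ _| ^+ 2 + _); apply: val_inj.
Qed.

Lemma adjmx_mx2 (a b c d : C) : adjmx (mx2 a b c d) = mx2 a^* c^* b^* d^*.
Proof.
by apply/matrixP => i k; rewrite !mxE; case: i => [[|[|?]] ?]; case: k => [[|[|?]] ?].
Qed.

Lemma unitarymx_scaled_step_mx l : Defs.unitarymx ((5 : C)^-1 *: step_mx 'i l).
Proof.
have i2 : 'i * 'i = -1 :> C by rewrite -expr2 sqrCi.
have k25 : 25 * 5^-1 * 5^-1 = 1 :> C by field.
have conjM (x y : C) : (x * y)^* = x^* * y^* by exact: rmorphM.
have conjN (x : C) : (- x)^* = - x^* by exact: rmorphN.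
have k_conj : (5^-1 : C)^* = 5^-1 by apply: conj_Creal; rewrite realV realn.
rewrite /Defs.unitarymx /step_mx -mx2_1; case: l;
  rewrite scale_mx2 adjmx_mx2 mx2_mul !conjM ?conjN k_conj ?conjC_nat ?conjCi;
  congr mx2; ring: i2 k25.
Qed.

Lemma adjmxM n (A B : 'M[C]_n) : adjmx (A *m B) = adjmx B *m adjmx A.
Proof.
apply/matrixP => i k; rewrite !mxE rmorph_sum; apply: eq_bigr => l _.
by rewrite !mxE rmorphM mulrC.
Qed.

Lemma adjmxK n (A : 'M[C]_n) : adjmx (adjmx A) = A.
Proof. by apply/matrixP => i k; rewrite !mxE conjCK. Qed.

Lemma unitarymx_adjmx_mul n (U : 'M[C]_n) : Defs.unitarymx U -> adjmx U *m U = 1%:M.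
Proof. exact: mulmx1C. Qed.

Lemma unitarymx_conj n (V U : 'M[C]_n) :
  Defs.unitarymx V -> Defs.unitarymx U -> Defs.unitarymx (V *m U *m adjmx V).
Proof.
move=> V_unitary U_unitary; rewrite /Defs.unitarymx !adjmxM adjmxK !mulmxA.
by rewrite -(mulmxA _ (adjmx V)) unitarymx_adjmx_mul // mulmx1 -(mulmxA V) U_unitary mulmx1.
Qed.

Lemma sqnorm_unitarymx n (U : 'M[C]_n) (v : 'cV[C]_n) : Defs.unitarymx U ->
  \sum_i `|(U *m v) i 0| ^+ 2 = \sum_i `|v i 0| ^+ 2.
Proof.
have sqnormE (w : 'cV[C]_n) :
    \sum_i `|w i 0| ^+ 2 = ((map_mx Num.conj w)^T *m w) 0 0.
  by rewrite mxE; apply: eq_bigr => i _; rewrite !mxE normCK mulrC.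
have adjmxE : (map_mx Num.conj U)^T = adjmx U by apply/matrixP => i k; rewrite !mxE.
move=> U_unitary; rewrite !sqnormE map_mxM trmx_mul adjmxE mulmxA.
by rewrite -(mulmxA _ (adjmx U)) unitarymx_adjmx_mul // mulmx1.
Qed.
End Unitary.

Section Automata.
Variable C : numClosedFieldType.
Implicit Types (M : mcqfa2 C) (y : seq letter) (v w : 'cV[C]_2).

Lemma final_state_rcons M y l :
  final_state M (rcons y l) = letter_mx M l *m final_state M y.
Proof. by rewrite /final_state foldl_rcons. Qed.

Lemma wf_final_state_sqnorm M y :
  wf_mcqfa2 M -> \sum_i `|final_state M y i 0| ^+ 2 = 1.
Proof.
case=> Ua_unitary Ub_unitary u0_unit; elim/last_ind: y => [//|y l IH].
by rewrite final_state_rcons sqnorm_unitarymx //; case: l.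
Qed.

Definition conj_mcqfa2 (V : 'M[C]_2) M (A : {set 'I_2}) : mcqfa2 C :=
  MCQFA2 (V *m Ua M *m adjmx V) (V *m Ub M *m adjmx V) (V *m u0 M) A.

Lemma final_state_conj V M A y : Defs.unitarymx V ->
  final_state (conj_mcqfa2 V M A) y = V *m final_state M y.
Proof.
move=> V_unitary; elim/last_ind: y => [//|y l IH].
rewrite !final_state_rcons IH.
have -> : letter_mx (conj_mcqfa2 V M A) l = V *m letter_mx M l *m adjmx V by case: l.
by rewrite !mulmxA -(mulmxA _ (adjmx V)) unitarymx_adjmx_mul // mulmx1.
Qed.

Lemma wf_conj V M A : Defs.unitarymx V -> wf_mcqfa2 M -> wf_mcqfa2 (conj_mcqfa2 V M A).
Proof.
move=> V_unitary [Ua_unitary Ub_unitary u0_unit].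
by split; rewrite /= ?sqnorm_unitarymx //; apply: unitarymx_conj.
Qed.

Definition align_mx (v : 'cV[C]_2) : 'M[C]_2 :=
  mx2 (v ord0 ord0)^* (v ord_max ord0)^* (- v ord_max ord0) (v ord0 ord0).

Lemma align_mx_unitary v : \sum_i `|v i 0| ^+ 2 = 1 -> Defs.unitarymx (align_mx v).
Proof.
rewrite sqnorm2E !normCK => v_unit.
rewrite /Defs.unitarymx /align_mx adjmx_mx2 mx2_mul -mx2_1 !conjCK.
have conjN (x : C) : (- x)^* = - x^* by exact: rmorphN.
by rewrite conjN; congr mx2; rewrite -?v_unit; ring.
Qed.

Lemma align_mx_mul_ord_max v w : (align_mx v *m w) ord_max ord0 = cross2 v w.
Proof. by rewrite [w]cv2_eta mx2_mulcv cv2E /cross2 !cv2E /=; ring. Qed.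

Definition base_mcqfa2 : mcqfa2 C :=
  MCQFA2 (5^-1 *: step_mx 'i false) (5^-1 *: step_mx 'i true) (cv2 1 0) set0.

Lemma wf_base_mcqfa2 : wf_mcqfa2 base_mcqfa2.
Proof.
split; try exact: unitarymx_scaled_step_mx.
by rewrite sqnorm2E !cv2E /= normr1 normr0 expr1n expr0n addr0.
Qed.

Lemma final_state_base y : final_state base_mcqfa2 y = 5^-1 ^+ size y *: word_vec 'i y.
Proof.
elim/last_ind: y => [|y l IH]; first by rewrite scale1r.
rewrite final_state_rcons word_vec_rcons IH size_rcons exprSr -scalerA -scalemxAr.
by case: l; rewrite /= !scalemxAl.
Qed.
End Automata.

Unset Implicit Arguments.
Theorem mainTheorem14 (C : numClosedFieldType) (x : seq letter) :
  exists M : mcqfa2 C,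
    wf_mcqfa2 M /\ nd_recognizes M (fun y => y <> x).
Proof.
pose M0 := base_mcqfa2 C; pose V := align_mx (final_state M0 x).
have V_unitary : Defs.unitarymx V.
  exact/align_mx_unitary/wf_final_state_sqnorm/wf_base_mcqfa2.
exists (conj_mcqfa2 V M0 [set ord_max]); split; first exact/wf_conj/wf_base_mcqfa2.
move=> y; have -> : acc_prob (conj_mcqfa2 V M0 [set ord_max]) y =
    `|5^-1 ^+ (size x + size y) * cross2 (word_vec 'i x) (word_vec 'i y)| ^+ 2.
  rewrite /acc_prob big_set1 final_state_conj // align_mx_mul_ord_max.
  by rewrite !final_state_base cross2Zl cross2Zr mulrA exprD.
split=> [yx | not_yx].
  rewrite sqrf_eq0 normr_eq0 mulf_eq0 expf_eq0 invr_eq0 pnatr_eq0 andbF /=.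
  by apply: cross2_word_vec_neq0; apply/eqP => xy; apply: yx.
have -> : y = x by apply/eqP/negPn/negP => /eqP.
by rewrite cross2vv mulr0 normr0 expr0n.
Qed.
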